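(* For every integer $k \geq 2$, the Nyldon factorization of the Fibonacci word $F_k$ is the two-term sequence $a,\ F_k[2..f_k]$. That is, $F_k = a\cdot F_k[2..f_k]$, both $a$ and $F_k[2..f_k]$ are Nyldon words, and $a \preceq F_k[2..f_k]$.
   Context: Strings are over the binary alphabet $\{a,b\}$ ordered by $a \prec b$, and $\prec$ also denotes the induced lexicographic order on strings: $x \prec y$ iff $x$ is a proper prefix of $y$, or there is $i$ with $x[1..i-1]=y[1..i-1]$ and $x[i]\prec y[i]$; $x\preceq y$ means $x\prec y$ or $x=y$. For a string $w$, $w[i..j]$ denotes the substring from position $i$ to position $j$ (1-indexed). Nyldon words are defined recursively: every string of length $1$ is a Nyldon word; a string $w$ with $|w|\ge 2$ is a Nyldon word iff there is no factorization $w=\gamma_1\cdots\gamma_m$ with $m\ge 2$, each $\gamma_i$ a nonempty Nyldon word, and $\gamma_1\preceq\gamma_2\preceq\cdots\preceq\gamma_m$. Every nonempty string $w$ has a unique factorization $w=\gamma_1\cdots\gamma_m$ into Nyldon words with $\gamma_i\preceq\gamma_{i+1}$ for all $i$; it is called the Nyldon factorization of $w$. Fibonacci words: $F_0=b$, $F_1=a$, $F_k=F_{k-1}F_{k-2}$ for $k\ge 2$; $f_k=|F_k|$. *)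

From mathcomp Require Import all_boot.
Set Implicit Arguments. Unset Strict Implicit. Unset Printing Implicit Defensive.

(* Binary alphabet {a,b} encoded as bool: a = false, b = true, so a < b. *)
Definition a : bool := false.
Definition b : bool := true.
Definition word := seq bool.

Definition letter_lt (c d : bool) : bool := ~~ c && d.

Fixpoint lexlt (x y : word) : bool :=
  match x, y with
  | [::], [::] => false
  | [::], _ :: _ => true
  | _ :: _, [::] => false
  | c :: x', d :: y' => letter_lt c d || ((c == d) && lexlt x' y')
  end.

Definition lexle (x y : word) : bool := lexlt x y || (x == y).

(* Nyldon words, by recursion on length (fuel = length of the word suffices,
   since every factor of a factorization with >= 2 nonempty factors is
   strictly shorter). *)
Fixpoint nyldonN (n : nat) (w : word) : Prop :=
  match n with
  | 0 => False
  | n'.+1 =>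
      size w = 1 \/
      (2 <= size w /\
       ~ exists gs : seq word,
           [/\ 2 <= size gs, flatten gs = w,
               all (fun g => g != [::]) gs,
               (forall g, g \in gs -> nyldonN n' g) &
               sorted lexle gs])
  end.

Definition nyldon (w : word) : Prop := nyldonN (size w) w.

Fixpoint fibw (k : nat) : word :=
  match k with
  | 0 => [:: b]
  | 1 => [:: a]
  | (k'.+1 as k1).+1 => fibw k1 ++ fibw k'
  end.

From mathcomp Require Import all_boot zify.
From Stdlib Require Import Classical.
Set Implicit Arguments. Unset Strict Implicit. Unset Printing Implicit Defensive.

(* Write F_k = a g_k and let h_k = g_k a be the conjugate of F_k; then
   h_(k+3) = h_(k+2) h_(k+1) and g_(k+3) = h_(k+2) g_(k+1).  Two facts on Nyldon
   words, proved together by induction on length, drive the argument: a Nyldon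
   word is strictly greater than each of its proper Nyldon suffixes, and the
   last factor of a Nyldon factorization is its longest Nyldon suffix.  They
   give a Hall-type criterion: if u and v are Nyldon, v < u, and every proper
   Nyldon suffix of u is at most v, then uv is Nyldon.  Along the recurrences
   this shows that every h_k, and then every g_k with k >= 2, is Nyldon. *)

Lemma lexltxx x : lexlt x x = false.
Proof. by elim: x => //= c x ->; case: c. Qed.

Lemma lexlt_trans y x z : lexlt x y -> lexlt y z -> lexlt x z.
Proof.
elim: x y z => [|c x IH] [|d y] [|e z] //=.
by case: c; case: d; case: e => //=; rewrite /letter_lt /=; apply: IH.
Qed.

Lemma lexlt_total x y : [|| x == y, lexlt x y | lexlt y x].
Proof.
elim: x y => [|c x IH] [|d y] //=.
by rewrite eqseq_cons; case: c; case: d => //=; rewrite /letter_lt.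
Qed.

Lemma lexltNge x y : lexlt x y = ~~ lexle y x.
Proof.
rewrite /lexle negb_or; case Hxy: (lexlt x y).
  apply/esym/andP; split; apply/negP.
    by move/(lexlt_trans Hxy); rewrite lexltxx.
  by move/eqP=> Eyx; move: Hxy; rewrite Eyx lexltxx.
by move: (lexlt_total x y); rewrite Hxy eq_sym; case: (y == x); case: (lexlt y x).
Qed.

Lemma lexltW x y : lexlt x y -> lexle x y.
Proof. by rewrite /lexle => ->. Qed.

Lemma lexlexx x : lexle x x.
Proof. by rewrite /lexle eqxx orbT. Qed.

Lemma lexle_lt_trans y x z : lexle x y -> lexlt y z -> lexlt x z.
Proof. by case/orP => [/lexlt_trans|/eqP ->] //; apply. Qed.

Lemma lexlt_le_trans y x z : lexlt x y -> lexle y z -> lexlt x z.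
Proof. by move=> Hxy; case/orP => [/(lexlt_trans Hxy)|/eqP <-]. Qed.

Lemma lexle_trans y x z : lexle x y -> lexle y z -> lexle x z.
Proof.
by move=> Hxy; case/orP => [/(lexle_lt_trans Hxy)/lexltW|/eqP <-].
Qed.

Lemma lexlt_catr x y : y != [::] -> lexlt x (x ++ y).
Proof. by elim: x => [|c x IH] /=; [case: y | move/IH ->; rewrite eqxx orbT]. Qed.

Lemma lexle_catr x y : lexle x (x ++ y).
Proof.
by case: y => [|d y]; [rewrite cats0 lexlexx | rewrite lexltW ?lexlt_catr].
Qed.

Lemma lexle_a w : w != [::] -> lexle [:: a] w.
Proof. by case: w => [|[] [|d w]]. Qed.

(* A Nyldon factorization of [flatten gs]; the factors are nonempty because
   [nyldon [::]] is false. *)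
Definition nyldon_seq (gs : seq word) : Prop :=
  {in gs, forall g, nyldon g} /\ sorted lexle gs.

Lemma nyldon_nonnil w : nyldon w -> w != [::].
Proof. by case: w. Qed.

Lemma size_mem_flatten_lt (gs : seq word) g :
  g \in gs -> all (fun g => g != [::]) gs -> 2 <= size gs ->
  size g < size (flatten gs).
Proof.
case/splitPr => gs1 gs2; rewrite all_cat /= => /andP [Hgs1 /andP [_ Hgs2]].
rewrite size_cat /= => Hsize; rewrite flatten_cat /= !size_cat.
rewrite addnCA -[X in X < _]addn0 ltn_add2l addn_gt0 !lt0n !size_eq0.
case: gs1 Hgs1 Hsize => [|g1 gs1] /=; last by case: g1.
by case: gs2 Hgs2 => [|g2 gs2] //= /andP []; case: g2.
Qed.

Lemma nyldonN_fuel n m g :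
  size g <= n -> size g <= m -> nyldonN n g <-> nyldonN m g.
Proof.
elim: n m g => [|n IH] [|m] g //=.
- by rewrite leqn0 => /nilP -> _; split=> // [[|[]]].
- by move=> _; rewrite leqn0 => /nilP ->; split=> // [[|[]]].
move=> Hn Hm.
have factors_fuel gs h : 2 <= size gs -> flatten gs = g ->
    all (fun g => g != [::]) gs -> h \in gs -> nyldonN n h <-> nyldonN m h.
  move=> Hgs Eg Hgs0 Hh; have := size_mem_flatten_lt Hh Hgs0 Hgs.
  by rewrite Eg => Hlt; apply: IH; rewrite -ltnS; apply: leq_trans Hlt _.
split=> [[Hg|[Hg Hfact]]|[Hg|[Hg Hfact]]]; [by left | | by left |]; right; split=> //;
  case=> gs [Hgs Eg Hgs0 Ngs Sgs]; apply: Hfact; exists gs; split=> // h Hh;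
  by apply/(factors_fuel gs)=> //; apply: Ngs.
Qed.

Lemma nyldonN_size n g : size g <= n -> nyldonN n g <-> nyldon g.
Proof. by move=> Hg; apply: nyldonN_fuel. Qed.

Lemma nyldonP w : nyldon w <->
  size w = 1 \/
  (2 <= size w /\ forall gs, flatten gs = w -> nyldon_seq gs -> size gs <= 1).
Proof.
rewrite /nyldon; case Ew: (size w) => [|m] /=; rewrite ?Ew; first by split=> // [[|[]]].
have factors_size gs g : 2 <= size gs -> flatten gs = w ->
    all (fun g => g != [::]) gs -> g \in gs -> size g <= m.
  move=> Hgs Eg Hgs0 Hg; rewrite -ltnS -Ew -Eg.
  exact: size_mem_flatten_lt Hg Hgs0 Hgs.
split=> [[Hw|[Hw Hfact]]|[Hw|[Hw Hfact]]]; [by left | | by left |]; right; split=> //.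
  move=> gs Eg [Ngs Sgs]; rewrite leqNgt; apply/negP=> Hgs; apply: Hfact.
  have Hgs0 : all (fun g => g != [::]) gs by apply/allP=> g /Ngs/nyldon_nonnil.
  exists gs; split=> // g Hg.
  by apply/nyldonN_size; [exact: factors_size Hg | exact: Ngs].
case=> gs [Hgs Eg Hgs0 Ngs Sgs].
suff: size gs <= 1 by rewrite leqNgt Hgs.
apply: Hfact=> //; split=> // g Hg.
by apply/(nyldonN_size (factors_size _ _ Hgs Eg Hgs0 Hg)); apply: Ngs.
Qed.

Lemma nyldon_letter c : nyldon [:: c].
Proof. by apply/nyldonP; left. Qed.

Lemma nyldonI w : 2 <= size w ->
  (forall gs, flatten gs = w -> nyldon_seq gs -> size gs <= 1) -> nyldon w.
Proof. by move=> Hw Hfact; apply/nyldonP; right. Qed.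

Lemma nyldon_seq_size w gs :
  nyldon w -> flatten gs = w -> nyldon_seq gs -> size gs <= 1.
Proof.
case/nyldonP=> [Hw|[_ Hfact]]; last exact: Hfact.
case: gs => [|g [|g' gs]] // Eg [Ngs _].
have Hgs0 : all (fun g => g != [::]) [:: g, g' & gs].
  by apply/allP=> h /Ngs/nyldon_nonnil.
have := size_mem_flatten_lt (mem_head _ _) Hgs0 isT.
by rewrite Eg Hw ltnS leqn0 size_eq0 => /eqP g0; move: Hgs0; rewrite g0.
Qed.

Lemma nyldon_seq_of_nyldon w gs :
  nyldon w -> flatten gs = w -> nyldon_seq gs -> gs = [:: w].
Proof.
move=> Nw Eg Hgs; have := nyldon_seq_size Nw Eg Hgs.
case: gs Eg {Hgs} => [|g [|g' gs]] //= Eg _; first by move: Nw; rewrite -Eg.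
by rewrite -Eg cats0.
Qed.

Lemma nyldon_seq_exists w : exists2 gs, flatten gs = w & nyldon_seq gs.
Proof.
have [Nw|Nw] := classic (nyldon w).
  by exists [:: w]; [rewrite /= cats0 | split=> // g; rewrite inE => /eqP ->].
apply: NNPP => Hno; apply: Nw; apply/nyldonP.
case: w Hno => [|c [|d w]] Hno; [by case: Hno; exists [::] | by left | right].
by split=> // gs Eg Hgs; case: Hno; exists gs.
Qed.

Lemma nyldon_last_factor w : w != [::] ->
  exists es d, w = flatten es ++ d /\ nyldon_seq (rcons es d).
Proof.
have [gs Eg Hgs] := nyldon_seq_exists w.
case/lastP: gs Eg Hgs => [<- //|es d]; rewrite flatten_rcons => <- Hgs _.
by exists es, d.
Qed.

Lemma nyldon_seq_rcons es d : nyldon_seq (rcons es d) -> nyldon_seq es /\ nyldon d.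
Proof.
case=> Ngs Sgs; split; last by apply: Ngs; rewrite mem_rcons mem_head.
split=> [g Hg|]; first by apply: Ngs; rewrite mem_rcons inE Hg orbT.
by case: es Sgs {Ngs} => //= e es; rewrite rcons_path => /andP [].
Qed.

Lemma nyldon_seq_cons g gs : nyldon_seq (g :: gs) -> nyldon_seq gs.
Proof.
case=> Ngs Sgs; split; last exact: path_sorted Sgs.
by move=> h Hh; apply: Ngs; rewrite inE Hh orbT.
Qed.

Lemma flatten_nyldon_seq_eq0 gs : nyldon_seq gs -> (flatten gs == [::]) = (gs == [::]).
Proof.
case: gs => [|g gs] //= [Ngs _].
by have := nyldon_nonnil (Ngs g (mem_head _ _)); case: (g).
Qed.

Lemma nyldon_seq_cat es d e fs :
  nyldon_seq (rcons es d) -> nyldon_seq (e :: fs) -> lexle d e ->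
  nyldon_seq (rcons es d ++ e :: fs).
Proof.
case=> N1 S1 [N2 S2] Hde; split=> [g|]; first by rewrite mem_cat => /orP [/N1|/N2].
case: es S1 {N1} => [|e' es] /=; first by rewrite Hde.
by rewrite cat_path last_rcons /= Hde => ->.
Qed.

Lemma not_nyldon_cat es d e fs :
  nyldon_seq (rcons es d) -> nyldon_seq (e :: fs) -> lexle d e ->
  ~ nyldon ((flatten es ++ d) ++ flatten (e :: fs)).
Proof.
move=> H1 H2 Hde Nw; have := nyldon_seq_size Nw _ (nyldon_seq_cat H1 H2 Hde).
rewrite flatten_cat flatten_rcons size_cat size_rcons => /(_ erefl).
by rewrite addSn addnS.
Qed.

Lemma not_nyldon_rcons es d v :
  nyldon_seq (rcons es d) -> nyldon v -> lexle d v -> ~ nyldon ((flatten es ++ d) ++ v).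
Proof.
move=> Hs Nv; have := @not_nyldon_cat es d v [::] Hs; rewrite /= cats0; apply.
by split=> // g; rewrite inE => /eqP ->.
Qed.

Lemma lexle_flatten_last u es d :
  nyldon u -> flatten es = u -> nyldon_seq (rcons es d) -> lexle u d.
Proof.
move=> Nu Eu Hs; have [Hes _] := nyldon_seq_rcons Hs.
by move: Hs; rewrite (nyldon_seq_of_nyldon Nu Eu Hes) => -[_ /andP []].
Qed.

Lemma cat_eq_cases (T : eqType) (x1 y1 x2 y2 : seq T) : x1 ++ y1 = x2 ++ y2 ->
  (exists z, x2 = x1 ++ z /\ y1 = z ++ y2) \/
  (exists2 z, x1 = x2 ++ z /\ y2 = z ++ y1 & z != [::]).
Proof.
elim: x1 x2 => [|c x1 IH] x2 /=; first by move=> ->; left; exists x2.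
case: x2 => [|d x2] /=; first by move=> <-; right; exists (c :: x1).
case=> -> /IH [[z [-> ->]]|[z [-> ->] Hz]]; first by left; exists z.
by right; exists z.
Qed.

Lemma cat_eq_suffix_le (T : eqType) (x1 y1 x2 y2 : seq T) :
  x1 ++ y1 = x2 ++ y2 -> size y2 <= size y1 ->
  exists z, x2 = x1 ++ z /\ y1 = z ++ y2.
Proof.
case/cat_eq_cases=> [//|[z [_ ->]]]; rewrite size_cat.
by case: z => [|c z] //= _; rewrite addSn ltnNge leq_addl.
Qed.

(* From the suffix inequality for words shorter than [n] we get the
   longest-suffix property below [n] and the suffix inequality at length [n]. *)
Section SuffixInduction.

Variable n : nat.
Hypothesis nyldon_suffix_lt_below : forall g t x, size g < n ->
  nyldon g -> nyldon t -> g = x ++ t -> x != [::] -> lexlt t g.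

Lemma nyldon_suffix_not_inside g e fs x z :
  nyldon_seq [:: g, e & fs] -> size g < n -> g = x ++ z -> z != [::] ->
  ~ nyldon (z ++ flatten (e :: fs)).
Proof.
move=> Hgs Hg Eg Hz; have [Ngs Sgs] := Hgs.
have /andP [Hge Sefs] : lexle g e && path lexle e fs := Sgs.
have Nefs := nyldon_seq_cons Hgs.
have [x0|Hx] := eqVneq x [::].
  by move=> Ns; have := nyldon_seq_size Ns _ Hgs; rewrite Eg x0 => /(_ erefl).
have [es [d [Ez Hs]]] := nyldon_last_factor Hz.
rewrite Ez; apply: (not_nyldon_cat Hs Nefs).
apply/lexltW/(lexlt_le_trans _ Hge)/(nyldon_suffix_lt_below (x := x ++ flatten es)) => //.
- by apply: Ngs; rewrite mem_head.
- exact: (nyldon_seq_rcons Hs).2.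
- by rewrite Eg Ez catA.
- by case: (x) Hx.
Qed.

Lemma last_factor_longest_below gs x s :
  nyldon_seq gs -> size (flatten gs) < n -> flatten gs = x ++ s -> nyldon s ->
  size s <= size (last [::] gs).
Proof.
move=> + + + Ns; have := nyldon_nonnil Ns.
elim: gs x => [|g gs IH] x Hs0 Hgs Hsize /=; first by case: x => [|c x] //= <-.
have Hg : size g < n by apply: leq_ltn_trans Hsize; rewrite /= size_cat leq_addr.
case/cat_eq_cases=> [[y [_ Egs]]|[z [Eg Es] Hz]].
  case: gs IH Hgs Hsize Egs => [|e fs] IH Hgs Hsize Egs.
    by move: Hs0; case: y Egs => [|c y] //= <-.
  apply: (IH y) => //; first exact: nyldon_seq_cons Hgs.
  by apply: leq_ltn_trans Hsize; rewrite [flatten (g :: _)]/= size_cat leq_addl.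
case: gs IH Hgs Hsize Es => [|e fs] IH Hgs Hsize Es.
  by rewrite Es /= cats0 Eg size_cat leq_addl.
by case: (nyldon_suffix_not_inside Hgs Hg Eg Hz); rewrite -Es.
Qed.

Lemma nyldon_suffix_extend u t :
  nyldon u -> nyldon t -> lexlt t u -> size (u ++ t) < n ->
  exists p y, [/\ u ++ t = p ++ y ++ t, nyldon (y ++ t) & y != [::]].
Proof.
move=> Nu Nt Htu Hsize.
have Hut : u ++ t != [::] by case: (u) (nyldon_nonnil Nu).
have [es [d [Eut Hs]]] := nyldon_last_factor Hut.
have Htd : size t <= size d.
  have := last_factor_longest_below (x := u) Hs; rewrite flatten_rcons last_rcons -Eut.
  by apply.
have [y [Eu Ed]] := cat_eq_suffix_le (esym Eut) Htd.
exists (flatten es), y; split; first by rewrite Eut Ed.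
  by rewrite -Ed; exact: (nyldon_seq_rcons Hs).2.
apply: contraTneq Htu => y0.
have Eu' : flatten es = u by rewrite Eu y0 cats0.
by have := lexle_flatten_last Nu Eu' Hs; rewrite Ed y0 lexltNge negbK.
Qed.

Lemma nyldon_suffix_lt_step g t x : size g <= n ->
  nyldon g -> nyldon t -> g = x ++ t -> x != [::] -> lexlt t g.
Proof.
(* Induction on [size x]: the Nyldon suffix [y ++ t] of [g] found below is
   preceded by a prefix shorter than [x]. *)
move=> Hg Ng; have [k Hk] := ubnP (size x).
elim: k x t Hk => [//|k IHk] x t /ltnSE Hx Nt Eg Hx0.
have [es [d [Ex Hs]]] := nyldon_last_factor Hx0.
have Nd := (nyldon_seq_rcons Hs).2.
have Htd : lexlt t d.
  rewrite lexltNge; apply/negP => Hdt.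
  by apply: (not_nyldon_rcons Hs Nt Hdt); rewrite -Ex -Eg.
have [es0|Hes] := eqVneq (flatten es) [::].
  by apply: (lexlt_le_trans Htd); rewrite Eg Ex es0 lexle_catr.
have Hdt : size (d ++ t) < n.
  apply: leq_trans _ Hg; rewrite Eg Ex -catA (size_cat _ (d ++ t)).
  by rewrite -[X in X < _]add0n ltn_add2r lt0n size_eq0.
have [p [y [Edt Nyt Hy]]] := nyldon_suffix_extend Nd Nt Htd Hdt.
have Hp : size p < size d.
  move/(congr1 size): Edt; rewrite !size_cat.
  move: Hy; rewrite -size_eq0.
  by move: (size d) (size p) (size y) (size t) => ? ? ? ?; lia.
apply: (lexlt_trans (y := y ++ t)).
  apply: (nyldon_suffix_lt_below (x := y)) => //.
  by apply: leq_ltn_trans _ Hdt; rewrite Edt (size_cat p) leq_addl.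
apply: (IHk (flatten es ++ p)) => //.
- by apply: leq_trans Hx; rewrite Ex !size_cat ltn_add2l.
- by rewrite Eg Ex -catA Edt catA.
- by case: (flatten es) Hes.
Qed.

End SuffixInduction.

Lemma nyldon_suffix_lt g t x :
  nyldon g -> nyldon t -> g = x ++ t -> x != [::] -> lexlt t g.
Proof.
suff lt_below n : forall g t x, size g < n ->
    nyldon g -> nyldon t -> g = x ++ t -> x != [::] -> lexlt t g.
  exact: lt_below (size g).+1 g t x (ltnSn _).
elim: n => [//|n IH] g' t' x' /ltnSE; exact: nyldon_suffix_lt_step.
Qed.

Lemma last_factor_longest gs x s :
  nyldon_seq gs -> flatten gs = x ++ s -> nyldon s -> size s <= size (last [::] gs).
Proof.
move=> Hgs; apply: (last_factor_longest_below (n := (size (flatten gs)).+1)) => //.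
by move=> g t y _; apply: nyldon_suffix_lt.
Qed.

Definition nyldon_suffixes_le (u v : word) : Prop :=
  forall x s, u = x ++ s -> x != [::] -> nyldon s -> lexle s v.

Lemma nyldon_suffixes_le_trans v u w :
  nyldon_suffixes_le u v -> lexle v w -> nyldon_suffixes_le u w.
Proof. by move=> Huv Hvw x s Eu Hx Ns; apply: lexle_trans (Huv x s Eu Hx Ns) Hvw. Qed.

Lemma nyldon_suffixes_le_drop u v :
  (forall i, 0 < i -> lexle (drop i u) v) -> nyldon_suffixes_le u v.
Proof.
move=> Hdrop x s Eu Hx _; have := Hdrop (size x); rewrite Eu drop_size_cat //.
by apply; rewrite lt0n size_eq0.
Qed.

Lemma not_nyldon_suffix_cat u v x y :
  nyldon_suffixes_le u v -> nyldon v -> u = x ++ y -> x != [::] -> y != [::] ->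
  ~ nyldon (y ++ v).
Proof.
move=> Huv Nv Eu Hx Hy; have [es [d [Ey Hs]]] := nyldon_last_factor Hy.
rewrite Ey; apply: (not_nyldon_rcons Hs Nv).
apply: (Huv (x ++ flatten es)); first by rewrite Eu Ey catA.
  by case: (x) Hx.
exact: (nyldon_seq_rcons Hs).2.
Qed.

Lemma nyldon_cat u v : nyldon u -> nyldon v -> lexlt v u ->
  nyldon_suffixes_le u v -> nyldon (u ++ v).
Proof.
move=> Nu Nv Hvu Huv; apply: nyldonI => [|gs Egs Hgs].
  move: (nyldon_nonnil Nu) (nyldon_nonnil Nv).
  by case: (u) => [|c u'] // _; case: (v) => [|d v'] // _; rewrite size_cat /= addnS.
rewrite leqNgt; apply/negP => Hgs2.
case/lastP: gs Egs Hgs Hgs2 => [//|es d]; rewrite flatten_rcons => Egs Hs Hgs2.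
have Hvd : size v <= size d.
  have := @last_factor_longest _ u v Hs.
  by rewrite flatten_rcons last_rcons; apply.
have [y [Eu Ed]] := cat_eq_suffix_le Egs Hvd.
have [y0|Hy] := eqVneq y [::].
  have Eu' : flatten es = u by rewrite Eu y0 cats0.
  have := lexle_flatten_last Nu Eu' Hs.
  by rewrite Ed y0 /= -[lexle _ _]negbK -lexltNge Hvu.
have Hes : flatten es != [::].
  rewrite (flatten_nyldon_seq_eq0 (nyldon_seq_rcons Hs).1).
  by rewrite -size_eq0 -lt0n -ltnS -(size_rcons es d).
apply: (not_nyldon_suffix_cat Huv Nv Eu Hes Hy).
by rewrite -Ed; exact: (nyldon_seq_rcons Hs).2.
Qed.

Lemma nyldon_suffixes_le_cat u z :
  nyldon z -> nyldon_suffixes_le u z -> nyldon_suffixes_le (u ++ z) z.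
Proof.
move=> Nz Huz x s E Hx Ns.
have [Hsz|Hzs] := leqP (size s) (size z).
  have [y [_ Ez]] := cat_eq_suffix_le E Hsz.
  have [y0|Hy] := eqVneq y [::]; first by rewrite Ez y0 lexlexx.
  exact/lexltW/(nyldon_suffix_lt Nz Ns Ez Hy).
have [y [Eu Es]] := cat_eq_suffix_le (esym E) (ltnW Hzs).
have Hy : y != [::] by apply: contraTneq Hzs => y0; rewrite Es y0 ltnn.
by case: (not_nyldon_suffix_cat Huz Nz Eu Hx Hy); rewrite -Es.
Qed.

Definition fib_tail k := drop 1 (fibw k).

Definition fib_conj k := fib_tail k ++ [:: a].

Lemma fibw_head k : fibw k.+1 = a :: fib_tail k.+1.
Proof.
elim: k => [|k IH] //; rewrite /fib_tail.
by have -> : fibw k.+2 = fibw k.+1 ++ fibw k by []; rewrite IH /= drop0.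
Qed.

Lemma fib_tail_rec k : fib_tail k.+3 = fib_conj k.+2 ++ fib_tail k.+1.
Proof.
rewrite {1}/fib_tail.
have -> : fibw k.+3 = (a :: fib_tail k.+2) ++ (a :: fib_tail k.+1) by rewrite -!fibw_head.
by rewrite /= drop0 /fib_conj -catA.
Qed.

Lemma fib_conj_rec k : fib_conj k.+3 = fib_conj k.+2 ++ fib_conj k.+1.
Proof. by rewrite {1}/fib_conj fib_tail_rec /fib_conj -!catA. Qed.

Lemma fib_conj_nonnil k : fib_conj k != [::].
Proof. by rewrite /fib_conj; case: (fib_tail k). Qed.

Lemma nyldon_fib_conj j :
  [/\ nyldon (fib_conj j.+2), nyldon (fib_conj j.+1),
      lexlt (fib_conj j.+1) (fib_conj j.+2)
    & nyldon_suffixes_le (fib_conj j.+2) (fib_conj j.+1)].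
Proof.
elim: j => [|j [N2 N1 Hlt S21]].
  have Nb := nyldon_letter b; have Na := nyldon_letter a.
  split=> //; last by apply: nyldon_suffixes_le_drop => -[|[|i]].
  by apply: (nyldon_cat Nb Na) => //; apply: nyldon_suffixes_le_drop => -[|i].
rewrite fib_conj_rec; split=> //.
- exact: nyldon_cat.
- exact: lexlt_catr (fib_conj_nonnil _).
- exact: nyldon_suffixes_le_trans (nyldon_suffixes_le_cat N1 S21) (lexltW Hlt).
Qed.

Lemma nyldon_fib_tail j : nyldon (fib_tail j.+2).
Proof.
suff: nyldon (fib_tail j.+2) /\ nyldon (fib_tail j.+3) by case.
elim: j => [|j [N2 N3]].
  by split; [exact: nyldon_letter | case: (nyldon_fib_conj 0)].
split=> //; rewrite fib_tail_rec.
have [N4 _ _ _] := nyldon_fib_conj j.+1; have [_ N1 _ S21] := nyldon_fib_conj j.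
apply: nyldon_cat => //; first by rewrite fib_conj_rec /fib_conj -catA lexlt_catr.
rewrite fib_conj_rec; apply: nyldon_suffixes_le_trans (nyldon_suffixes_le_cat N1 S21) _.
by case: j {N2 N3 N4 N1 S21} => [|j] //; rewrite fib_tail_rec lexle_catr.
Qed.

Theorem theorem1 (k : nat) : 2 <= k ->
  [/\ fibw k = a :: drop 1 (fibw k),
      nyldon [:: a],
      nyldon (drop 1 (fibw k)) &
      lexle [:: a] (drop 1 (fibw k))].
Proof.
case: k => [|[|j]] // _; have Ntail := nyldon_fib_tail j.
split; [exact: fibw_head | exact: nyldon_letter | exact: Ntail |].
exact: lexle_a (nyldon_nonnil Ntail).
Qed.
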